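(* For every $m\ge1$ and every $\theta\in(0,1]$, $\lim_{n\to\infty}\rho(\mathrm{IRV},m,n,\theta)=0$. Equivalently, the critical value of IRV in the Perturbed Culture model is $\theta_c(\mathrm{IRV},m)=0$.
   Context: A ranking is a strict total order on the candidates. A discrete profile consists of candidates, $n$ voters and a ranking $P_v$ per voter. For a set $K$ of candidates, $P_K$ restricts each ranking to $K$; the Plurality score $s_{\mathrm{Plu}}(c,P)$ is the number of voters ranking $c$ first. IRV: starting from all candidates, repeatedly eliminate a remaining candidate with minimal Plurality score in the profile restricted to the remaining candidates (ties broken by an arbitrary fixed rule); the last remaining candidate wins. CM: a rule $f$ is coalitionally manipulable in a discrete profile $P$ if there is a discrete $Q$ with the same candidates and voters such that $f(Q)\neq f(P)$ and every voter $v$ with $Q_v\ne P_v$ prefers $f(Q)$ to $f(P)$ according to $P_v$. Perturbed Culture ($m,n\ge1$, $\theta\in(0,1]$): random discrete profile with candidates $\{1,\dots,m\}$, voters $\{1,\dots,n\}$, each voter independently having ranking $1\succ\cdots\succ m$ with probability $\theta$ and a uniformly random ranking with probability $1-\theta$. $\rho(f,m,n,\theta)$: probability that $f$ is CM in the random profile. For a rule $f$, the critical value $\theta_c(f,m)$ (when it exists) is the common value of $\theta_l$, the largest value in $[0,1]$ such that $\theta<\theta_l$ implies $\lim_n\rho=1$, and $\theta_u$, the smallest value in $[0,1]$ such that $\theta>\theta_u$ implies $\lim_n\rho=0$. *)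

From HB Require Import structures.
From mathcomp Require Import all_boot all_order all_algebra all_fingroup.
From mathcomp Require Import all_classical all_reals all_analysis.

Set Implicit Arguments.
Unset Strict Implicit.
Unset Printing Implicit Defensive.
Import Order.TTheory GRing.Theory Num.Theory.

(* Candidates are 'I_m (candidate i stands for i+1), voters are 'I_n.
   A ranking (strict total order on candidates) is a permutation r of 'I_m
   giving the position of each candidate: r c = 0 means c is ranked first. *)
Definition ranking (m : nat) := {perm 'I_m}.

Definition prefers (m : nat) (r : ranking m) (c d : 'I_m) : bool := r c < r d.

Definition profile (m n : nat) := {ffun 'I_n -> ranking m}.

Definition plu_score (m n : nat) (K : {set 'I_m}) (P : profile m n) (c : 'I_m) : nat :=
  #|[set v : 'I_n | (c \in K) && [forall d in K, (d != c) ==> prefers (P v) c d]]|.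

Definition min_plu (m n : nat) (K : {set 'I_m}) (P : profile m n) : {set 'I_m} :=
  [set c in K | [forall d in K, plu_score K P c <= plu_score K P d]].

Definition valid_tiebreak (m : nat) (tb : {set 'I_m} -> {set 'I_m} -> 'I_m) : Prop :=
  forall K T : {set 'I_m}, T != finset.set0 -> tb K T \in T.

Definition irv_step (m n : nat) (tb : {set 'I_m} -> {set 'I_m} -> 'I_m)
  (P : profile m n) (K : {set 'I_m}) : {set 'I_m} :=
  K :\ tb K (min_plu K P).

Definition irv_set (m n : nat) (tb : {set 'I_m} -> {set 'I_m} -> 'I_m)
  (P : profile m n) : {set 'I_m} :=
  iter m.-1 (irv_step tb P) [set: 'I_m].

(* IRV winner (always Some _ when m >= 1 and tb is valid). *)
Definition irv (m n : nat) (tb : {set 'I_m} -> {set 'I_m} -> 'I_m)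
  (P : profile m n) : option 'I_m :=
  [pick c in irv_set tb P].

Definition oprefers (m : nat) (r : ranking m) (a b : option 'I_m) : bool :=
  match a, b with
  | Some c, Some d => prefers r c d
  | _, _ => false
  end.

Definition CM (m n : nat) (f : profile m n -> option 'I_m) (P : profile m n) : Prop :=
  exists Q : profile m n,
    f Q <> f P /\
    forall v : 'I_n, Q v != P v -> oprefers (P v) (f Q) (f P).

Local Open Scope ring_scope.

(* Perturbed Culture: probability of a single ranking, with 1 = identity
   permutation = ranking 1 > 2 > ... > m. There are m! rankings. *)
Definition pc_rank_prob (R : realType) (m : nat) (theta : R) (r : ranking m) : R :=
  (if r == 1%g then theta else 0) + (1 - theta) / (m`!)%:R.

Definition pc_prob (R : realType) (m n : nat) (theta : R) (P : profile m n) : R :=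
  \prod_(v : 'I_n) pc_rank_prob theta (P v).

Definition rho (R : realType) (m n : nat) (f : profile m n -> option 'I_m) (theta : R) : R :=
  \sum_(P : profile m n | `[< CM f P >]) pc_prob theta P.

(* Under Perturbed Culture with theta > 0, a random ballot puts the sincere
   winner (candidate 0 here) first among any set K of remaining candidates with
   probability at least theta + (1 - theta) / |K| > 1 / |K|.  By a Chernoff
   bound, with probability tending to 1 its Plurality score in every K with
   |K| >= 2 exceeds n / |K|, and a union bound over the finitely many K makes
   this hold simultaneously.  In such a profile IRV is not coalitionally
   manipulable: the candidate is never a minimal-score candidate, so it wins;
   a coalition electing c instead consists of voters preferring c to it, so
   none of them ranks it first in a set containing c, its scores along the
   manipulated elimination sequence cannot drop, and it still wins. *)

From HB Require Import structures.
From mathcomp Require Import all_boot all_order all_algebra all_fingroup.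
From mathcomp Require Import all_classical all_reals all_analysis.
From mathcomp Require Import zify ring lra.
Import Order.TTheory GRing.Theory Num.Theory.
Import numFieldNormedType.Exports.
Set Implicit Arguments.
Unset Strict Implicit.

Definition first_in (m : nat) (K : {set 'I_m}) (r : ranking m) (d : 'I_m) : bool :=
  (d \in K) && [forall e in K, (e != d) ==> prefers r d e].

Section IrvRounds.
Variables (m n : nat) (tb : {set 'I_m} -> {set 'I_m} -> 'I_m).
Hypothesis tb_valid : valid_tiebreak tb.
Implicit Types (K : {set 'I_m}) (r : ranking m) (P Q : profile m n).

Lemma first_in_uniq K r d1 d2 : first_in K r d1 -> first_in K r d2 -> d1 = d2.
Proof.
case/andP=> d1K /forall_inP H1; case/andP=> d2K /forall_inP H2.
apply/eqP; apply/negPn/negP => ne.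
have := H1 _ d2K; rewrite eq_sym ne /= /prefers => h1.
have := H2 _ d1K; rewrite ne /= /prefers => h2; lia.
Qed.

Lemma plu_scoreE K P d :
  plu_score K P d = \sum_(v : 'I_n) first_in K (P v) d.
Proof.
rewrite /plu_score -sum1_card big_mkcond /=; apply: eq_bigr => v _.
by rewrite inE /first_in; case: (_ && _).
Qed.

Lemma sum_plu_score_le K P : \sum_(d in K) plu_score K P d <= n.
Proof.
under eq_bigr do rewrite plu_scoreE.
rewrite exchange_big /= -[X in _ <= X]card_ord -sum1_card; apply: leq_sum => v _.
rewrite -big_mkcondr sum1_card; apply/card_le1_eqP => x y.
by move=> /andP[_ Hx] /andP[_ Hy]; exact: first_in_uniq Hy Hx.
Qed.

Lemma tb_min_plu K P x : x \in K -> tb K (min_plu K P) \in min_plu K P.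
Proof.
move=> xK; apply: tb_valid; apply/set0Pn.
exists [arg min_(c < x in K) plu_score K P c].
case: arg_minnP => // c cK Hc.
by rewrite inE cK; apply/forall_inP => d dK; exact: Hc.
Qed.

(* The eliminated candidate has at most the average score over K, which is at
   most n / |K|. *)
Lemma mem_irv_step K P w :
  w \in K -> n < #|K| * plu_score K P w -> w \in irv_step tb P K.
Proof.
move=> wK strong; rewrite /irv_step !inE wK andbT; apply/eqP => ew.
have := tb_min_plu P wK; rewrite -ew inE => /andP[_ /forall_inP w_min].
have : \sum_(d in K) plu_score K P w <= \sum_(d in K) plu_score K P d.
  by apply: leq_sum => d dK; exact: w_min.
have := sum_plu_score_le K P; rewrite sum_nat_const; lia.
Qed.

Definition irv_round P k := iter k (irv_step tb P) [set: 'I_m].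

Lemma card_irv_round P k : k <= m.-1 -> #|irv_round P k| = m - k.
Proof.
elim: k => [|k IH] hk; first by rewrite /= cardsT card_ord subn0.
have card_k := IH (ltnW hk).
have [x xK] : exists x, x \in irv_round P k.
  by apply/card_gt0P; rewrite card_k; lia.
move: card_k (tb_min_plu P xK); rewrite /= /irv_step -/(irv_round P k).
set e := tb _ _; rewrite subnS (cardsD1 e) => <-.
by rewrite inE => /andP[-> _].
Qed.

Lemma irv_round_subset P j k : k <= j -> irv_round P j \subset irv_round P k.
Proof.
elim: j => [|j IH]; first by rewrite leqn0 => /eqP ->.
rewrite leq_eqVlt => /orP[/eqP -> //|hk].
by apply: fintype.subset_trans (IH hk); rewrite /= /irv_step subsetDl.
Qed.

Lemma irv_winner P w : 0 < m ->
  (forall k, k < m.-1 -> w \in irv_round P k ->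
     n < #|irv_round P k| * plu_score (irv_round P k) P w) ->
  irv tb P = Some w.
Proof.
move=> m_gt0 strong.
have w_in k : k <= m.-1 -> w \in irv_round P k.
  elim: k => [|k IH] hk; first by rewrite inE.
  by apply: mem_irv_step; [exact: IH (ltnW hk) | exact: strong (IH (ltnW hk))].
have /cards1P [x ex] : #|irv_round P m.-1| == 1.
  by rewrite card_irv_round //; apply/eqP; lia.
have := w_in _ (leqnn _); rewrite ex inE => /eqP ->.
rewrite /irv /irv_set -/(irv_round P m.-1) ex.
by case: pickP => [c|/(_ x)]; rewrite ?set11 // inE => /eqP ->.
Qed.

Lemma irv_in_set P c : irv tb P = Some c -> c \in irv_set tb P.
Proof. by rewrite /irv; case: pickP => // c' + [<-]. Qed.

Lemma leq_plu_score_coalition P Q K c w : c \in K ->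
  (forall u, Q u != P u -> prefers (P u) c w) ->
  plu_score K P w <= plu_score K Q w.
Proof.
move=> cK coalition; apply: subset_leq_card; apply/fintype.subsetP => u.
rewrite !inE => /andP[wK /forall_inP w_top]; rewrite wK /=.
suff -> : Q u = P u by apply/forall_inP.
apply/eqP/negPn/negP => /coalition; rewrite /prefers.
have [-> | cw] := eqVneq c w; first by rewrite ltnn.
by have := w_top c cK; rewrite cw /prefers /=; lia.
Qed.

Lemma irv_not_CM P w : 0 < m ->
  (forall K, w \in K -> 1 < #|K| -> n < #|K| * plu_score K P w) ->
  ~ CM (irv tb) P.
Proof.
move=> m_gt0 strong.
have irvP : irv tb P = Some w.
  by apply: irv_winner => // k hk wK; apply: strong; rewrite // card_irv_round; lia.
case=> Q []; rewrite irvP => irvQ coalition.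
have [v changed] : exists v, Q v != P v.
  apply/existsP; apply: contra_notT irvQ; rewrite negb_exists => /forallP same.
  by rewrite -irvP; congr irv; apply/ffunP => v; apply/eqP; rewrite -[_ == _]negbK same.
move: (coalition v changed); case eQ: (irv tb Q) => [c|] //= _.
have cw : c != w by apply/eqP => cw; apply: irvQ; rewrite eQ cw.
suff : irv tb Q = Some w by rewrite eQ => -[cw']; rewrite cw' eqxx in cw.
apply: irv_winner => // k hk wK.
have cK : c \in irv_round Q k.
  exact: fintype.subsetP (irv_round_subset Q (ltnW hk)) _ (irv_in_set eQ).
apply: leq_trans (strong _ wK _) _; first by rewrite card_irv_round; lia.
rewrite leq_mul2l (leq_plu_score_coalition cK) ?orbT // => u /coalition.
by rewrite eQ.
Qed.

End IrvRounds.

Section FirstInCount.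
Variables (m : nat) (K : {set 'I_m}).

Lemma first_in_exists r x : x \in K -> exists d, first_in K r d.
Proof.
move=> xK; exists [arg min_(d < x in K) (r d : nat)].
case: arg_minnP => // d dK Hd.
rewrite /first_in dK; apply/forall_inP => e eK; apply/implyP => ne.
rewrite /prefers ltn_neqAle Hd // andbT.
by apply: contra ne => /eqP /val_inj /perm_inj ->.
Qed.

Lemma first_in_tperm r w d : w \in K -> first_in K r d ->
  first_in K (tperm w d * r)%g w.
Proof.
move=> wK /andP[dK /forall_inP d_top].
rewrite /first_in wK; apply/forall_inP => e eK; apply/implyP => ne.
rewrite /prefers !permM tpermL.
move: ne; have [-> ne | ned ne] := eqVneq e d.
  by rewrite tpermR; have := d_top w wK; rewrite eq_sym ne.
by rewrite tpermD 1?eq_sym //; have := d_top e eK; rewrite ned.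
Qed.

Lemma card_first_in_le w d : w \in K ->
  #|[set r : ranking m | first_in K r d]| <= #|[set r : ranking m | first_in K r w]|.
Proof.
move=> wK; rewrite -(card_imset _ (mulgI (tperm w d))).
apply: subset_leq_card; apply/fintype.subsetP => _ /imsetP [r + ->].
by rewrite !inE; exact: first_in_tperm.
Qed.

(* Every ranking has a first candidate in K, and by card_first_in_le w is
   first at least as often as any of them. *)
Lemma card_first_in w : w \in K ->
  m`! <= #|K| * #|[set r : ranking m | first_in K r w]|.
Proof.
move=> wK; rewrite -sum_nat_const.
apply: (@leq_trans (\sum_(d in K) #|[set r : ranking m | first_in K r d]|)); last first.
  by apply: leq_sum => d _; exact: card_first_in_le.
rewrite -card_Sn -sum1_card.
under [X in _ <= X]eq_bigr => d _ do rewrite -sum1_card big_mkcond /=.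
rewrite exchange_big /=; apply: leq_sum => r _.
have [d d_top] := first_in_exists r wK.
by rewrite (bigD1 d) /= ?inE ?d_top //; case/andP: d_top.
Qed.

End FirstInCount.

Local Open Scope ring_scope.

Section ElementaryInequalities.
Variable R : realFieldType.

Lemma bernoulli_ineq (e : R) (j : nat) : 0 <= e <= 1 -> 1 - j%:R * e <= (1 - e) ^+ j.
Proof.
case/andP=> e0 e1; elim: j => [|j IH]; first by rewrite expr0 mul0r subr0.
rewrite exprS -natr1.
have : 0 <= (1 - e) ^+ j by rewrite exprn_ge0 // subr_ge0.
have : 0 <= j%:R :> R by rewrite ler0n.
move: IH; set x := (1 - e) ^+ j; set J := j%:R; nra.
Qed.

Lemma geometric_ineq (s : R) (j : nat) : 0 <= s <= 1 -> j%:R * (1 - s) * s ^+ j <= 1 - s ^+ j.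
Proof.
case/andP=> s0 s1; elim: j => [|j IH]; first by rewrite expr0 !mul0r subrr.
rewrite exprS -natr1.
have : 0 <= s ^+ j by rewrite exprn_ge0.
have : s ^+ j <= 1 by rewrite exprn_ile1.
have : 0 <= j%:R :> R by rewrite ler0n.
move: IH; set x := s ^+ j; set J := j%:R => IH J0 x1 x0.
have : 0 <= (J + 1) * (1 - s) * x * (1 - s) by rewrite !mulr_ge0 // ?subr_ge0; lra.
nra.
Qed.

(* For s := 1 - e we need p (1 - s^k) > e.  The Bernoulli and geometric
   inequalities give p (1 - s^k) >= p k e (1 - k e), which is e (p k + 1) / 2
   for the choice k e = (p k - 1) / (2 p k). *)
Lemma chernoff_rate_lt1 (p : R) (k : nat) : 0 <= p <= 1 -> 1 < p * k%:R ->
  exists2 s, 0 < s <= 1 & 0 <= (1 - p + p * s ^+ k) / s < 1.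
Proof.
case/andP=> p0 p1 pk1.
have k1 : 1 <= k%:R :> R by nra.
set a := p * k%:R in pk1.
pose e := (a - 1) / (2 * a * k%:R).
have ke : k%:R * e * (2 * a) = a - 1.
  by rewrite /e; field; apply/andP; split; apply/eqP; lra.
have e0 : 0 < e by apply: divr_gt0; nra.
have ke0 : 0 < k%:R * e by rewrite mulr_gt0 //; lra.
have e_small : k%:R * e <= 1 / 2 by nra.
have e_lt1 : e < 1 by nra.
exists (1 - e); first by apply/andP; split; lra.
have hB : 1 - k%:R * e <= (1 - e) ^+ k by apply: bernoulli_ineq; apply/andP; split; lra.
have hG : k%:R * e * (1 - e) ^+ k <= 1 - (1 - e) ^+ k.
  have := @geometric_ineq (1 - e) k; rewrite (_ : 1 - (1 - e) = e); last by ring.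
  by apply; apply/andP; split; lra.
have x0 : 0 <= (1 - e) ^+ k by rewrite exprn_ge0 //; lra.
set x := (1 - e) ^+ k in hB hG x0 *.
rewrite divr_ge0 /= ?ltr_pdivrMr; [|lra|nra|lra].
have ake : a * (k%:R * e) = (a - 1) / 2 by rewrite -ke; field.
have h1 : a * e * x <= p * (1 - x) by rewrite /a; nra.
have h2 : a * e * (1 - k%:R * e) <= a * e * x by nra.
have h3 : a * e * (1 - k%:R * e) = e * (a + 1) / 2.
  rewrite (_ : _ * (1 - _) = a * e - e * (a * (k%:R * e))); last by ring.
  by rewrite ake; field.
nra.
Qed.

End ElementaryInequalities.

Section IidDraws.
Variables (R : realFieldType) (T : finType) (q : T -> R) (A : pred T).
Hypotheses (q_ge0 : forall t, 0 <= q t) (q_sum1 : \sum_t q t = 1).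
Variable n : nat.
Local Notation draw := {ffun 'I_n -> T}.

Let pA := \sum_(t | A t) q t.

Lemma sum_ffun_prod (G : T -> R) :
  \sum_(x : draw) \prod_(v : 'I_n) G (x v) = (\sum_t G t) ^+ n.
Proof. by rewrite -(bigA_distr_bigA (fun (v : 'I_n) t => G t)) prodr_const card_ord. Qed.

(* Exponential Markov inequality: on the event, s^n <= s^(k * #{v | A (x v)}),
   and the expectation of the latter factorises over the n independent draws. *)
Lemma chernoff_count_le (k : nat) (s : R) : 0 < s <= 1 ->
  \sum_(x : draw | (k * #|[set v | A (x v)]| <= n)%N) \prod_v q (x v)
    <= ((1 - pA + pA * s ^+ k) / s) ^+ n.
Proof.
case/andP=> s0 s1.
have prod_ge0 (x : draw) : 0 <= \prod_v q (x v) by exact: prodr_ge0.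
have weight (x : draw) : \prod_v q (x v) * (s ^+ k) ^+ #|[set v | A (x v)]|
    = \prod_v (q (x v) * (if A (x v) then s ^+ k else 1)).
  rewrite -sum1_card expr_sum [X in _ * X]big_mkcond -big_split /=.
  by apply: eq_bigr => v _; rewrite inE; case: (A _).
have mgf : \sum_t q t * (if A t then s ^+ k else 1) = 1 - pA + pA * s ^+ k.
  have split1 : pA + \sum_(t | ~~ A t) q t = 1 by rewrite /pA -q_sum1 [in RHS](bigID A).
  rewrite (bigID A) /= (eq_bigr (fun t => q t * s ^+ k)) => [|t -> //].
  rewrite (eq_bigr q) => [|t /negbTE ->]; last exact: mulr1.
  by rewrite -big_distrl /= -/pA -split1; ring.
have sn0 : 0 < s ^+ n by rewrite exprn_gt0.
apply: (@le_trans _ _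
  (\sum_(x : draw) \prod_v q (x v) * (s ^+ k) ^+ #|[set v | A (x v)]| / s ^+ n)).
  rewrite [X in _ <= X](bigID (fun x : draw => k * #|[set v | A (x v)]| <= n)%N) /=.
  rewrite -[X in X <= _]addr0; apply: lerD; last first.
    apply: sumr_ge0 => x _.
    by rewrite divr_ge0 ?mulr_ge0 ?exprn_ge0 // ltW.
  apply: ler_sum => x cnt; rewrite -mulrA ler_peMr // ler_pdivlMr // mul1r -exprM.
  by apply: ler_wiXn2l => //; exact: ltW.
rewrite -big_distrl /= (eq_bigr _ (fun x _ => weight x)).
by rewrite (sum_ffun_prod (fun t => q t * (if A t then s ^+ k else 1))) mgf expr_div_n.
Qed.

End IidDraws.

Local Open Scope classical_set_scope.

Lemma cvg_sum_null (R : realType) (I : finType) (P : pred I) (u : I -> nat -> R) :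
  (forall i, P i -> u i n @[n --> \oo] --> 0) ->
  \sum_(i | P i) u i n @[n --> \oo] --> 0.
Proof.
move=> u_null; rewrite -[X in _ --> X](@big1 R 0 +%R _ (index_enum I) P (fun=> 0)) //.
exact: (cvg_big add_continuous _ u_null).
Qed.

Lemma chernoff_count_cvg0 (R : realType) (T : finType) (q : T -> R) (A : pred T) (k : nat) :
  (forall t, 0 <= q t) -> \sum_t q t = 1 -> 1 < (\sum_(t | A t) q t) * k%:R ->
  (fun n => \sum_(x : {ffun 'I_n -> T} | (k * #|[set v | A (x v)]%SET| <= n)%N)
              \prod_v q (x v)) @ \oo --> 0.
Proof.
move=> q_ge0 q_sum1 pk.
have pA01 : 0 <= \sum_(t | A t) q t <= 1.
  by rewrite sumr_ge0 //= -q_sum1 [leRHS](bigID A) /= lerDl sumr_ge0.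
have [s s01 /andP[r_ge0 r_lt1]] := chernoff_rate_lt1 pA01 pk.
set r := (_ / s) in r_ge0 r_lt1.
apply: (@squeeze_cvgr _ _ _ _ (cst 0) (fun n => r ^+ n)); last 2 first.
- exact: cvg_cst.
- by apply: cvg_expr; rewrite ger0_norm.
near=> n; rewrite sumr_ge0 /= => [|x _]; last exact: prodr_ge0.
by apply: le_trans (chernoff_count_le A q_ge0 q_sum1 n k s01) _.
Unshelve. all: end_near.
Qed.

Section PerturbedCulture.
Variables (R : realType) (m : nat) (theta : R).
Hypothesis theta01 : 0 <= theta <= 1.

Lemma pc_rank_prob_ge0 (r : ranking m) : 0 <= pc_rank_prob theta r.
Proof.
case/andP: theta01 => t0 t1.
by rewrite addr_ge0 ?divr_ge0 ?subr_ge0 ?ler0n //; case: ifP.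
Qed.

Lemma pc_rank_prob_sum1 : \sum_(r : ranking m) pc_rank_prob theta r = 1.
Proof.
rewrite big_split /= (bigD1 1%g) //= eqxx big1 => [|r /negbTE -> //].
rewrite sumr_const card_Sn addr0 -[X in _ + X]mulr_natr divfK; first by rewrite addrC subrK.
by rewrite pnatr_eq0 -lt0n fact_gt0.
Qed.

(* The sincere ranking 1 > ... > m puts candidate 0 first in every K, and the
   uniform part gives it at least a 1/|K| share by card_first_in. *)
Lemma pc_first_in_ge (K : {set 'I_m}) (w : 'I_m) : (w : nat) = 0%N -> w \in K ->
  theta + (1 - theta) / #|K|%:R <= \sum_(r | first_in K r w) pc_rank_prob theta r.
Proof.
case/andP: theta01 => _ t1 w0 wK.
have first_id : first_in K 1%g w.
  rewrite /first_in wK; apply/forall_inP => e _; apply/implyP => ne.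
  rewrite /prefers !perm1 w0 lt0n; apply: contraNneq ne => e0.
  by apply/eqP/val_inj; rewrite /= e0 w0.
rewrite big_split /= (bigD1 1%g) //= eqxx big1 => [|r /andP[_ /negbTE -> //]].
rewrite addr0 sumr_const lerD2l -[leRHS]mulr_natr -mulrA ler_wpM2l ?subr_ge0 //.
have K_gt0 : (0 < #|K|)%N by apply/card_gt0P; exists w.
rewrite mulrC ler_pdivlMr ?ltr0n ?fact_gt0 // ler_pdivrMl ?ltr0n // -natrM ler_nat.
by have := card_first_in wK; rewrite cardsE.
Qed.

Lemma pc_first_in_mass (K : {set 'I_m}) (w : 'I_m) : 0 < theta ->
  (w : nat) = 0%N -> w \in K -> (1 < #|K|)%N ->
  1 < (\sum_(r | first_in K r w) pc_rank_prob theta r) * #|K|%:R.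
Proof.
move=> t0 w0 wK K_gt1; case/andP: theta01 => _ t1.
have K2 : 2 <= #|K|%:R :> R by rewrite (ler_nat R 2).
have := ler_wpM2r (ler0n R #|K|) (pc_first_in_ge w0 wK).
rewrite mulrDl divfK; last by rewrite pnatr_eq0 -lt0n ltnW.
nra.
Qed.

End PerturbedCulture.

Lemma ler_sum_cover (R : numDomainType) (I J : finType) (P : pred I) (Q : pred J)
    (B : J -> pred I) (F : I -> R) :
  (forall i, 0 <= F i) -> (forall i, P i -> exists2 j, Q j & B j i) ->
  \sum_(i | P i) F i <= \sum_(j | Q j) \sum_(i | B j i) F i.
Proof.
move=> F_ge0 cover.
rewrite (eq_bigr _ (fun j _ => big_mkcond _ _)) exchange_big /= [leLHS]big_mkcond.
apply: ler_sum => i _; case: ifP => [/cover [j Qj Bji] | _].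
  rewrite (bigD1 j) //= Bji lerDl sumr_ge0 // => j' _.
  by case: ifP.
by apply: sumr_ge0 => j _; case: ifP.
Qed.

Lemma rho_irv_le_low_score (R : realType) (m n : nat)
    (tb : {set 'I_m} -> {set 'I_m} -> 'I_m) (theta : R) (w : 'I_m) :
  (0 < m)%N -> valid_tiebreak tb -> 0 <= theta <= 1 ->
  rho (@irv m n tb) theta <=
    \sum_(K : {set 'I_m} | (w \in K) && (1 < #|K|)%N)
      \sum_(P : profile m n | (#|K| * plu_score K P w <= n)%N) pc_prob theta P.
Proof.
move=> m_gt0 tb_valid theta01.
apply: ler_sum_cover => [P | P /asboolP CM_P].
  by apply: prodr_ge0 => v _; exact: pc_rank_prob_ge0.
suff /existsP [K /andP[K_cond K_low]] :
    [exists K : {set 'I_m}, ((w \in K) && (1 < #|K|)%N) && (#|K| * plu_score K P w <= n)%N].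
  by exists K.
apply: contraT; rewrite negb_exists => /forallP K_high; exfalso.
apply: (irv_not_CM tb_valid (w := w) m_gt0 _ CM_P) => K wK K_gt1.
by have := K_high K; rewrite wK K_gt1 -ltnNge.
Qed.

Theorem theorem5p3 (R : realType) (m : nat) (tb : {set 'I_m} -> {set 'I_m} -> 'I_m)
  (theta : R) :
  (1 <= m)%N -> valid_tiebreak tb -> 0 < theta <= 1 ->
  (fun n : nat => rho (@irv m n tb) theta) @ \oo --> (0 : R).
Proof.
move=> m_gt0 tb_valid /andP[theta_gt0 theta_le1].
have theta01 : 0 <= theta <= 1 by rewrite ltW.
pose w : 'I_m := Ordinal m_gt0.
apply: (@squeeze_cvgr _ _ _ _ (cst 0)
  (fun n => \sum_(K : {set 'I_m} | (w \in K) && (1 < #|K|)%N)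
     \sum_(P : profile m n | (#|K| * plu_score K P w <= n)%N) pc_prob theta P)).
- near=> n; rewrite rho_irv_le_low_score // andbT.
  apply: sumr_ge0 => P _; apply: prodr_ge0 => v _; exact: pc_rank_prob_ge0.
- exact: cvg_cst.
apply: cvg_sum_null => K /andP[wK K_gt1].
exact: chernoff_count_cvg0 (pc_rank_prob_ge0 theta01) (pc_rank_prob_sum1 m theta)
  (pc_first_in_mass theta01 theta_gt0 (erefl : (w : nat) = 0%N) wK K_gt1).
Unshelve. all: end_near.
Qed.
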